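(* Let $X,Y$ be non-empty subsets of $\mathbb{R}^2$, let $\eta\in\mathbb{R}\setminus\{0\}$, $\xi\in\mathbb{N}^*$, $\varepsilon>0$ and $A\in\mathrm{SL}(2,\mathbb{Z})$. If $Y\subseteq B_\varepsilon(X)$, then $A\circ J_{\eta,\xi}\circ A^{-1}(Y)\subseteq B_\varepsilon(\mathrm{Str}(X,A(0,\eta)))$.
   Context: $B_\varepsilon(Z)$ is the open $\varepsilon$-neighbourhood of $Z$. $\mathrm{Str}(X,w)=X+[-w,w]$ (Minkowski sum with the segment joining $-w$ and $w$). For $\xi\in\mathbb{N}^*$, $\phi_\xi(x)=(-1)^{z+1}(4\xi x-2z-1)$ for $z\in\mathbb{Z}$, $x\in[\frac{z}{2\xi},\frac{z+1}{2\xi})$, and $J_{\eta,\xi}(x,y)=(x,y+\eta\phi_\xi(x))$. *)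

From Stdlib Require Import Reals Lra Lia ZArith.
Open Scope R_scope.

Definition pt := (R * R)%type.

Definition dist2 (p q : pt) : R :=
  sqrt ((fst p - fst q)^2 + (snd p - snd q)^2).

Definition Bnbhd (eps : R) (Z : pt -> Prop) : pt -> Prop :=
  fun p => exists z, Z z /\ dist2 p z < eps.

Definition Str (X : pt -> Prop) (w : pt) : pt -> Prop :=
  fun p => exists x t, X x /\ -1 <= t <= 1 /\
    p = (fst x + t * fst w, snd x + t * snd w).

Definition img (f : pt -> pt) (Y : pt -> Prop) : pt -> Prop :=
  fun p => exists y, Y y /\ p = f y.

Definition subset2 (U V : pt -> Prop) : Prop := forall p, U p -> V p.

(* floor via Stdlib's up: up x is the unique integer with x < up x <= x + 1 *)
Definition floorR (x : R) : Z := (up x - 1)%Z.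

Definition phi (xi : nat) (x : R) : R :=
  let z := floorR (2 * INR xi * x) in
  powerRZ (-1) (z + 1) * (4 * INR xi * x - 2 * IZR z - 1).

Definition J (eta : R) (xi : nat) (p : pt) : pt :=
  (fst p, snd p + eta * phi xi (fst p)).

Record SL2Z := { ma : Z; mb : Z; mc : Z; md : Z;
                 mdet : (ma * md - mb * mc = 1)%Z }.

Definition Aapp (A : SL2Z) (p : pt) : pt :=
  (IZR (ma A) * fst p + IZR (mb A) * snd p,
   IZR (mc A) * fst p + IZR (md A) * snd p).

(* the inverse matrix [[d,-b],[-c,a]] (determinant 1) *)
Definition Ainv (A : SL2Z) (p : pt) : pt :=
  (IZR (md A) * fst p - IZR (mb A) * snd p,
   - IZR (mc A) * fst p + IZR (ma A) * snd p).

(* Conjugating the shear J by A gives A J A^-1 (y) = y + phi(.) A(0,eta), a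
   translation of y by a point of the segment [-A(0,eta), A(0,eta)] since
   |phi| <= 1.  Translations are isometries, so a point x of X within eps of y
   yields the point x + phi(.) A(0,eta) of Str(X, A(0,eta)) within eps of the
   image. *)
From Stdlib Require Import Reals ZArith Lra.
Open Scope R_scope.

Definition add_scaled (p : pt) (t : R) (w : pt) : pt :=
  (fst p + t * fst w, snd p + t * snd w).

Lemma Rabs_powerRZ_m1 (n : Z) : Rabs (powerRZ (-1) n) = 1.
Proof.
  destruct n as [|p|p]; simpl.
  - apply Rabs_R1.
  - apply pow_1_abs.
  - rewrite Rabs_inv, pow_1_abs; apply Rinv_1.
Qed.

Lemma Rabs_phi_le_1 (xi : nat) (x : R) : Rabs (phi xi x) <= 1.
Proof.
  unfold phi, floorR.
  rewrite Rabs_mult, Rabs_powerRZ_m1, Rmult_1_l, minus_IZR.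
  (* with v = 2 xi x, the factor is 2 (v - up v) + 1 and v < up v <= v + 1 *)
  destruct (archimed (2 * INR xi * x)) as [Hup_gt Hup_le].
  apply Rabs_le; simpl; lra.
Qed.

Lemma phi_bound (xi : nat) (x : R) : -1 <= phi xi x <= 1.
Proof.
  pose proof (Rabs_phi_le_1 xi x) as Habs.
  pose proof (Rle_abs (phi xi x)); pose proof (Rle_abs (- phi xi x)).
  rewrite Rabs_Ropp in *; lra.
Qed.

Lemma Aapp_Ainv (A : SL2Z) (p : pt) : Aapp A (Ainv A p) = p.
Proof.
  assert (Hdet : IZR (ma A) * IZR (md A) - IZR (mb A) * IZR (mc A) = 1).
  { rewrite <- !mult_IZR, <- minus_IZR, (mdet A); reflexivity. }
  destruct p as [p1 p2]; unfold Aapp, Ainv; simpl.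
  f_equal.
  - transitivity ((IZR (ma A) * IZR (md A) - IZR (mb A) * IZR (mc A)) * p1);
      [ring | rewrite Hdet; ring].
  - transitivity ((IZR (ma A) * IZR (md A) - IZR (mb A) * IZR (mc A)) * p2);
      [ring | rewrite Hdet; ring].
Qed.

Lemma Aapp_J (A : SL2Z) (eta : R) (xi : nat) (q : pt) :
  Aapp A (J eta xi q) = add_scaled (Aapp A q) (phi xi (fst q)) (Aapp A (0, eta)).
Proof.
  unfold Aapp, J, add_scaled; simpl; f_equal; ring.
Qed.

Lemma conj_J_add_scaled (A : SL2Z) (eta : R) (xi : nat) (p : pt) :
  Aapp A (J eta xi (Ainv A p)) =
  add_scaled p (phi xi (fst (Ainv A p))) (Aapp A (0, eta)).
Proof. now rewrite Aapp_J, Aapp_Ainv. Qed.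

Lemma dist2_add_scaled (p q w : pt) (t : R) :
  dist2 (add_scaled p t w) (add_scaled q t w) = dist2 p q.
Proof. unfold dist2, add_scaled; simpl; f_equal; ring. Qed.

Lemma Str_add_scaled (X : pt -> Prop) (w x : pt) (t : R) :
  X x -> -1 <= t <= 1 -> Str X w (add_scaled x t w).
Proof. intros Hx Ht; exists x, t; auto. Qed.

Theorem mainTheorem13 (X Y : pt -> Prop) (eta : R) (xi : nat) (eps : R) (A : SL2Z) :
  (exists x, X x) -> (exists y, Y y) ->
  eta <> 0 -> (0 < xi)%nat -> 0 < eps ->
  subset2 Y (Bnbhd eps X) ->
  subset2 (img (fun p => Aapp A (J eta xi (Ainv A p))) Y)
          (Bnbhd eps (Str X (Aapp A (0, eta)))).
Proof.
  intros _ _ _ _ _ HY p [y [Hy ->]].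
  destruct (HY y Hy) as [x [Hx Hxy]].
  set (t := phi xi (fst (Ainv A y))).
  exists (add_scaled x t (Aapp A (0, eta))); split.
  - apply Str_add_scaled; [exact Hx | apply phi_bound].
  - now rewrite conj_J_add_scaled, dist2_add_scaled.
Qed.
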